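(* Let $n,N,L\ge1$ be integers and $0<p<1$. In the random model described in the context, for every address $\mathbf{x}\in C$ and every integer $s\in[2^n]$, the probability that $\mathbf{x}$ has order $s$ in $\mathcal{G}$ is $$P(\mathbf{x}\in\mathsf{X}_s)=\begin{cases}\left(\sum_{i=\ell}^{n}\binom{n}{i}p^i(1-p)^{n-i}\right)^N-\left(\sum_{i=\ell+1}^{n}\binom{n}{i}p^i(1-p)^{n-i}\right)^N, & s=2^\ell \text{ for some } \ell\in\{0,1,\dots,n\},\\[2pt] 0, & \text{otherwise.}\end{cases}$$
   Context: Model: $M=2^n$, addresses $C=\{0,1\}^n$; each address $\mathbf{x}$ carries a strand $(\mathbf{x},\mathbf{d})$ with data $\mathbf{d}$ independent uniform on $\{0,1\}^L$. Each strand is transmitted $N$ times through $\mathsf{BEC}(p)$ (each symbol independently replaced by $*$ with probability $p$, independently across transmissions and strands); $\mathcal{S}_N((\mathbf{x},\mathbf{d}))$ is the multiset of the $N$ reads of that strand. An address $\mathbf{x}'$ is compatible with a read $(\mathbf{y},\mathbf{d}')$ if it coincides with $\mathbf{y}$ at all non-erased positions of $\mathbf{y}$. The bipartite graph $\mathcal{G}$ has left vertices $C$, right vertices all $MN$ reads, and an edge between an address and a read iff they are compatible; $E_{(\mathbf{y},\mathbf{d}')}$ denotes the set of left neighbours of a read. A left vertex $\mathbf{x}$ has order $s$ if $\min\{|E_{(\mathbf{y},\mathbf{d}')}|:(\mathbf{y},\mathbf{d}')\in\mathcal{S}_N((\mathbf{x},\mathbf{d}))\}=s$; $\mathsf{X}_s$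 is the set of left vertices of order $s$. *)

(* discrete finite probability space for the DNA-storage
   random model (addresses, uniform data, N transmissions through BEC(p)). *)
From HB Require Import structures.
From mathcomp Require Import all_boot all_order all_algebra.
Set Implicit Arguments. Unset Strict Implicit. Unset Printing Implicit Defensive.
Import Order.TTheory GRing.Theory Num.Theory.
Local Open Scope ring_scope.

Definition Addr (n : nat) := {ffun 'I_n -> bool}.
Definition Data (L : nat) := {ffun 'I_L -> bool}.

(* erasure pattern of one transmission of one strand: true = erased
   (address positions, data positions) *)
Definition Erasure (n L : nat) := ({ffun 'I_n -> bool} * {ffun 'I_L -> bool})%type.

(* an outcome: the data of every strand, and the erasure patterns of the
   N transmissions of every strand *)
Definition Outcome (n N L : nat) :=
  ({ffun Addr n -> Data L} * {ffun Addr n -> {ffun 'I_N -> Erasure n L}})%type.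

(* a read: symbols in {0,1,*}, with None = * *)
Definition Read (n L : nat) :=
  ({ffun 'I_n -> option bool} * {ffun 'I_L -> option bool})%type.

Definition bec {R : pzRingType} (p : R) (b : bool) : R := if b then p else 1 - p.

(* probability of an outcome: data uniform and independent, erasures i.i.d. *)
Definition weight {R : fieldType} (n N L : nat) (p : R) (w : Outcome n N L) : R :=
  \prod_(x : Addr n)
     (((2 ^ L)%N%:R)^-1 *
      \prod_(j < N) ((\prod_(i < n) bec p ((w.2 x j).1 i)) *
                     (\prod_(k < L) bec p ((w.2 x j).2 k)))).

Arguments weight {R} n N L p w.
Definition Prob {R : fieldType} (n N L : nat) (p : R) (E : pred (Outcome n N L)) : R :=
  \sum_(w : Outcome n N L | E w) weight n N L p w.

Definition read (n N L : nat) (w : Outcome n N L) (x : Addr n) (j : 'I_N) : Read n L :=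
  ([ffun i => if (w.2 x j).1 i then None else Some (x i)],
   [ffun k => if (w.2 x j).2 k then None else Some (w.1 x k)]).

Definition compatible (n L : nat) (x' : Addr n) (r : Read n L) : bool :=
  [forall i, (r.1 i == None) || (r.1 i == Some (x' i))].

(* E_r : set of left neighbours of read r in the bipartite graph G *)
Definition nbhd (n L : nat) (r : Read n L) : {set Addr n} :=
  [set x' | compatible x' r].

Definition has_order (n N L : nat) (w : Outcome n N L) (x : Addr n) (s : nat) : bool :=
  [exists j : 'I_N, #|nbhd (read w x j)| == s] &&
  [forall j : 'I_N, s <= #|nbhd (read w x j)|]%N.

Definition binom_tail {R : pzRingType} (n l : nat) (p : R) : R :=
  \sum_(l <= i < n.+1) 'C(n, i)%:R * p ^+ i * (1 - p) ^+ (n - i).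
Arguments Prob {R} n N L p E.

From HB Require Import structures.
From mathcomp Require Import all_boot all_order all_algebra.
Set Implicit Arguments. Unset Strict Implicit. Unset Printing Implicit Defensive.
Import Order.TTheory GRing.Theory Num.Theory.
Local Open Scope ring_scope.

(* A read of [x] with [k] erased address symbols is compatible with exactly
   [2^k] addresses, so [x] has order [2^m] with [m] the least number of erased
   address symbols among its [N] reads.  These [N] numbers are independent
   Binomial(n, p) variables, hence the order is at least [2^l] with probability
   [T(l)^N], [T] the binomial tail, and it is exactly [2^l] with probability
   [T(l)^N - T(l+1)^N].  The data and the other strands only contribute factors
   whose total mass is 1. *)

Section FfunSums.
Variables (R : comNzRingType) (I J : finType).

Lemma sum_ffun_family (Q : I -> pred J) (F : I -> J -> R) :
  \sum_(f : {ffun I -> J} | [forall i, Q i (f i)]) \prod_i F i (f i) =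
  \prod_i \sum_(j | Q i j) F i j.
Proof. by rewrite bigA_distr_big_dep; apply: eq_bigl => f; apply/forallP/familyP. Qed.

Lemma sum_ffun_at (i0 : I) (P : pred J) (F : I -> J -> R) :
  \sum_(f : {ffun I -> J} | P (f i0)) \prod_i F i (f i) =
  (\sum_(j | P j) F i0 j) * \prod_(i | i != i0) \sum_j F i j.
Proof.
pose Q i := if i == i0 then P else predT.
rewrite (eq_bigl (fun f : {ffun I -> J} => [forall i, Q i (f i)])); last first.
  move=> f; apply/idP/forallP => [Pf i | /(_ i0)]; last by rewrite /Q eqxx.
  by rewrite /Q; case: eqP => // ->.
rewrite sum_ffun_family (bigD1 i0) //= /Q eqxx; congr (_ * _).
by apply: eq_bigr => i /negbTE ->.
Qed.

End FfunSums.

Lemma sum_ffun_uniform (R : fieldType) (A D : finType) :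
  #|D|%:R != 0 :> R ->
  \sum_(f : {ffun A -> D}) \prod_(a : A) (#|D|%:R)^-1 = 1 :> R.
Proof.
move=> D_neq0; rewrite -(bigA_distr_bigA (fun _ _ => (#|D|%:R)^-1)) big1 // => a _.
by rewrite sumr_const -[RHS](mulVf D_neq0) mulr_natr.
Qed.

Definition num_erased (n : nat) (u : {ffun 'I_n -> bool}) : nat := #|[set i | u i]|.

Lemma num_erased_le n (u : {ffun 'I_n -> bool}) : (num_erased u <= n)%N.
Proof. by rewrite -[n in (_ <= n)%N]card_ord max_card. Qed.

Lemma card_num_erased n k :
  #|[set u : {ffun 'I_n -> bool} | num_erased u == k]| = 'C(n, k).
Proof.
rewrite -[n in 'C(n, _)]card_ord -card_draws.
pose f (u : {ffun 'I_n -> bool}) := [set i | u i].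
have bij_f : bijective f.
  exists (fun A : {set 'I_n} => [ffun i => i \in A]) => [u | A].
    by apply/ffunP => i; rewrite ffunE inE.
  by apply/setP => i; rewrite inE ffunE.
rewrite -(on_card_preimset (onW_bij _ bij_f)).
by apply: eq_card => u; rewrite !inE.
Qed.

Section BinaryErasureChannel.
Variables (R : comNzRingType) (p : R) (n : nat).

Lemma sum_prod_bec : \sum_(u : {ffun 'I_n -> bool}) \prod_i bec p (u i) = 1.
Proof.
rewrite -(bigA_distr_bigA (fun (i : 'I_n) b => bec p b)) big1 // => i _.
by rewrite big_bool /= addrC subrK.
Qed.

Lemma prod_bec (u : {ffun 'I_n -> bool}) :
  \prod_i bec p (u i) = p ^+ num_erased u * (1 - p) ^+ (n - num_erased u).
Proof.
rewrite (bigID u) /= (eq_bigr (fun=> p)) => [|i ->] //.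
rewrite [X in _ * X](eq_bigr (fun=> 1 - p)) => [|i /negbTE ->] //.
rewrite !prodr_const -cardsE; congr (_ ^+ _ * _ ^+ _).
rewrite -[n in (n - _)%N]card_ord -(cardC [set i | u i]) addKn.
by apply: eq_card => i; rewrite !inE.
Qed.

Lemma sum_prod_bec_erased_ge m :
  \sum_(u : {ffun 'I_n -> bool} | (m <= num_erased u)%N) \prod_i bec p (u i) =
  binom_tail n m p.
Proof.
under eq_bigr do rewrite prod_bec.
have num_erased_lt (u : {ffun 'I_n -> bool}) : (num_erased u < n.+1)%N.
  by rewrite ltnS num_erased_le.
rewrite (partition_big (fun u => inord (num_erased u) : 'I_n.+1)
                       (fun k : 'I_n.+1 => m <= k)%N) => [|u]; last by rewrite inordK.
rewrite /binom_tail big_geq_mkord; apply: eq_bigr => k m_le_k.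
rewrite (eq_bigl (fun u => num_erased u == k)) => [|u]; last first.
  by rewrite -val_eqE /= inordK //; case: eqP => [-> | _]; rewrite ?m_le_k ?andbF.
rewrite (eq_bigr (fun=> p ^+ k * (1 - p) ^+ (n - k))) => [|u /eqP -> //].
by rewrite sumr_const -cardsE card_num_erased -mulrA mulr_natl.
Qed.

End BinaryErasureChannel.

Lemma card_nbhd n L (r : Read n L) : #|nbhd r| = (2 ^ #|[set i | r.1 i == None]|)%N.
Proof.
pose x0 : Addr n := [ffun i => odflt false (r.1 i)].
pose flips (x' : Addr n) := [set i | x' i != x0 i].
have flips_inj : injective flips.
  move=> x1 x2 eq12; apply/ffunP => i; move/setP/(_ i): eq12; rewrite !inE.
  by case: (x1 i); case: (x2 i); case: (x0 i).
rewrite -card_powerset -(card_imset _ flips_inj); apply: eq_card => S.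
rewrite powersetE; apply/imsetP/subsetP => [[x' Cx' ->] i | S_erased].
  move: Cx'; rewrite !inE /compatible /x0 ffunE => /forallP /(_ i).
  by case: (r.1 i) => //= b /eqP [->]; rewrite eqxx.
exists [ffun i => (i \in S) (+) x0 i].
  rewrite inE /compatible; apply/forallP => i; rewrite ffunE.
  case: (boolP (i \in S)) => [/S_erased | _]; first by rewrite inE => ->.
  by rewrite /x0 ffunE; case: (r.1 i) => [b|] /=; rewrite ?eqxx ?orbT.
by apply/setP => i; rewrite inE ffunE; case: (i \in S); case: (x0 i).
Qed.

Lemma card_nbhd_read n N L (w : Outcome n N L) x j :
  #|nbhd (read w x j)| = (2 ^ num_erased (w.2 x j).1)%N.
Proof.
rewrite card_nbhd; congr (2 ^ _)%N.
by apply: eq_card => i; rewrite !inE ffunE; case: ifP.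
Qed.

Section StrandErasures.
Variables (n N L : nat).

Definition erasures_ge m (e : {ffun 'I_N -> Erasure n L}) : bool :=
  [forall j, m <= num_erased (e j).1]%N.

Lemma has_order_exp2 (w : Outcome n N L) x l :
  has_order w x (2 ^ l) = erasures_ge l (w.2 x) && ~~ erasures_ge l.+1 (w.2 x).
Proof.
rewrite /has_order.
under eq_existsb => j do rewrite card_nbhd_read eqn_exp2l //.
under eq_forallb => j do rewrite card_nbhd_read leq_exp2l //.
rewrite /erasures_ge negb_forall andbC.
case: (boolP [forall j, _]) => //= /forallP l_le.
by apply: eq_existsb => j; rewrite -leqNgt eqn_leq l_le andbT.
Qed.

Lemma has_order_exp2_ex (w : Outcome n N L) x s :
  has_order w x s -> exists2 l, (l <= n)%N & s = (2 ^ l)%N.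
Proof.
case/andP => /existsP [j /eqP <-] _; exists (num_erased (w.2 x j).1).
  exact: num_erased_le.
exact: card_nbhd_read.
Qed.

Variables (R : comNzRingType) (p : R).

Definition erasure_weight (e : {ffun 'I_N -> Erasure n L}) : R :=
  \prod_(j < N) ((\prod_(i < n) bec p ((e j).1 i)) * (\prod_(k < L) bec p ((e j).2 k))).

Lemma sum_erasure_weight_cond (Q : pred {ffun 'I_n -> bool}) :
  \sum_(e : {ffun 'I_N -> Erasure n L} | [forall j, Q (e j).1]) erasure_weight e =
  (\sum_(u | Q u) \prod_i bec p (u i)) ^+ N.
Proof.
rewrite (sum_ffun_family (fun _ (uv : Erasure n L) => Q uv.1)
  (fun _ (uv : Erasure n L) => (\prod_i bec p (uv.1 i)) * (\prod_k bec p (uv.2 k)))).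
rewrite prodr_const card_ord; congr (_ ^+ _).
transitivity (\sum_(u | Q u) \sum_(v : {ffun 'I_L -> bool})
                (\prod_i bec p (u i)) * (\prod_k bec p (v k))).
  by rewrite pair_big; apply: eq_bigl => uv; rewrite andbT.
by under eq_bigr do rewrite -mulr_sumr sum_prod_bec mulr1.
Qed.

Lemma sum_erasure_weight : \sum_e erasure_weight e = 1.
Proof.
have := sum_erasure_weight_cond predT; rewrite sum_prod_bec expr1n => <-.
by apply: eq_bigl => e; apply/esym/forallP.
Qed.

Lemma sum_erasure_weight_ge m :
  \sum_(e | erasures_ge m e) erasure_weight e = binom_tail n m p ^+ N.
Proof.
rewrite (sum_erasure_weight_cond (fun u => m <= num_erased u)%N).
by rewrite sum_prod_bec_erased_ge.
Qed.

End StrandErasures.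

Lemma Prob_diff (R : fieldType) (n N L : nat) (p : R) (A B : pred (Outcome n N L)) :
  (forall w, B w -> A w) ->
  Prob n N L p (fun w => A w && ~~ B w) = Prob n N L p A - Prob n N L p B.
Proof.
move=> BA; rewrite /Prob [in RHS](bigID B) /= (eq_bigl B) => [|w].
  by rewrite addrC addrK.
by case: (boolP (B w)) => [/BA -> | _]; rewrite ?andbF.
Qed.

Lemma Prob_erasure_event (R : numFieldType) (n N L : nat) (p : R) (x : Addr n)
    (P : pred {ffun 'I_N -> Erasure n L}) :
  Prob n N L p (fun w => P (w.2 x)) = \sum_(e | P e) erasure_weight p e.
Proof.
set c := ((2 ^ L)%N%:R)^-1 : R.
transitivity (\sum_(d : {ffun Addr n -> Data L})
   \sum_(es : {ffun Addr n -> {ffun 'I_N -> Erasure n L}} | P (es x))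
     ((\prod_(y : Addr n) c) * \prod_y erasure_weight p (es y))).
  by rewrite pair_big; apply: eq_big => [w|w _] //; rewrite /weight big_split.
under eq_bigr do rewrite -mulr_sumr.
rewrite -mulr_suml (sum_ffun_at x P (fun _ e => erasure_weight p e)).
rewrite [X in _ * (_ * X)]big1 => [|y _].
  have card_Data : #|Data L| = (2 ^ L)%N by rewrite card_ffun card_bool card_ord.
  by rewrite /c -card_Data sum_ffun_uniform ?mul1r ?mulr1 // card_Data pnatr_eq0 expn_eq0.
exact: sum_erasure_weight.
Qed.

Theorem lemma8 (R : realFieldType) (n N L : nat) (p : R)
  (hn : (1 <= n)%N) (hN : (1 <= N)%N) (hL : (1 <= L)%N)
  (hp0 : 0 < p) (hp1 : p < 1) (x : Addr n) (s : nat)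
  (hs : (1 <= s <= 2 ^ n)%N) :
  (forall l : nat, (l <= n)%N -> s = (2 ^ l)%N ->
     Prob n N L p (fun w => has_order w x s) =
       binom_tail n l p ^+ N - binom_tail n l.+1 p ^+ N) /\
  ((forall l : nat, (l <= n)%N -> s <> (2 ^ l)%N) ->
     Prob n N L p (fun w => has_order w x s) = 0).
Proof.
split=> [l _ -> | not_exp2].
  have -> : Prob n N L p (fun w => has_order w x (2 ^ l)) =
      Prob n N L p (fun w => erasures_ge l (w.2 x) && ~~ erasures_ge l.+1 (w.2 x)).
    by apply: eq_bigl => w; rewrite has_order_exp2.
  rewrite Prob_diff => [|w /forallP ge_succ]; last by apply/forallP => j; exact: ltnW.
  by rewrite !Prob_erasure_event !sum_erasure_weight_ge.
rewrite /Prob big_pred0 // => w; apply/negbTE/negP.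
by case/has_order_exp2_ex => l l_le_n s_exp2; apply: (not_exp2 l).
Qed.
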